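(* Let $(G_n)_{n\in\mathbb{N}}$ be an $\mathrm{FO}$-convergent sequence of finite graphs with modeling limit $L$, and let $\xi(x)$ be a formula in the language of graphs with one free variable such that $\xi(L)$ is finite and nonempty, $\xi(L)$ contains no nonempty proper subset of the form $\chi(L)$ for a formula $\chi(x)$ in the language of graphs, and $|\xi(G_n)|=|\xi(L)|$ for every $n$. Then for every formula $\phi$ with $p$ free variables ($p\ge 0$) in the language of rooted graphs there exist a sequence $(r_n)$ with $r_n\in\xi(G_n)$ and a vertex $r\in\xi(L)$ such that $\lim_{n\to\infty}\langle\phi,(G_n,r_n)\rangle=\langle\phi,(L,r)\rangle$.
   Context: Graphs are first-order structures in the language with one binary (edge) relation. For a formula $\phi$ with $p$ free variables and a structure $G$, $\phi(G)=\{\mathbf{v}\in V(G)^p : G\models\phi(\mathbf{v})\}$. The Stone pairing of $\phi$ ($p\ge1$) with a finite graph $G$ is $\langle\phi,G\rangle=|\phi(G)|/|V(G)|^p$; for sentences it is $1$ if $G\models\phi$ and $0$ otherwise. A sequence of finite graphs is $\mathrm{FO}$-convergent if $(\langle\phi,G_n\rangle)$ converges for every formula $\phi$. A modeling is a graph $L$ whose vertex set is a standard Borel space with a probability measure $\nu$ such that every first-order definable set $\phi(L)\subseteq V(L)^p$ is measurable; $\langle\phi,L\rangle=\nu^{\otimes p}(\phi(L))$ (and $1$/$0$ for sentences). $L$ is a modeling limit of $(G_n)$ if $\lim_n\langle\phi,G_n\rangle=\langle\phi,L\rangle$ for all $\phi$. The language of rooted graphs adds a constant symbol $\mathrm{Root}$;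 $(G,r)$ is $G$ with $\mathrm{Root}$ interpreted as $r$, and Stone pairings with rooted structures are defined in the same way. *)

From HB Require Import structures.
From mathcomp Require Import all_boot all_order all_algebra.
From mathcomp Require Import all_classical all_reals all_analysis.
Set Implicit Arguments. Unset Strict Implicit. Unset Printing Implicit Defensive.
Import Order.TTheory GRing.Theory Num.Theory.
Import numFieldNormedType.Exports.
Local Open Scope classical_set_scope.
Local Open Scope ring_scope.

(* First-order syntax over the signature {edge relation} + constants  *)
(* from a type C.  Language of graphs: C := void (no constants).      *)
(* Language of rooted graphs: C := unit (one constant Root).          *)
Inductive term (C : Type) := TVar of nat | TConst of C.
Arguments TVar {C}. Arguments TConst {C}.

Inductive formula (C : Type) :=
| FEq  of term C & term C
| FAdj of term C & term C
| FNot of formula C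
| FAnd of formula C & formula C
| FEx  of nat & formula C.
Arguments FEq {C}. Arguments FAdj {C}. Arguments FNot {C}.
Arguments FAnd {C}. Arguments FEx {C}.

Definition graph_formula := formula void.
Definition rooted_formula := formula unit.
Definition Root : term unit := TConst tt.

Definition term_vars C (t : term C) : seq nat :=
  match t with TVar i => [:: i] | TConst _ => [::] end.

Fixpoint free_vars C (f : formula C) : seq nat :=
  match f with
  | FEq t1 t2 | FAdj t1 t2 => term_vars t1 ++ term_vars t2
  | FNot g => free_vars g
  | FAnd g h => free_vars g ++ free_vars h
  | FEx i g => [seq j <- free_vars g | j != i]
  end.

(* "phi has p free variables": its free variables are among x_0..x_{p-1} *)
Definition has_fv C (p : nat) (f : formula C) : Prop :=
  all (fun j => j < p)%N (free_vars f).

Definition term_eval C V (c : C -> V) (e : nat -> option V) (t : term C)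
  : option V :=
  match t with TVar i => e i | TConst k => Some (c k) end.

Fixpoint sat C V (adj : V -> V -> Prop) (c : C -> V) (e : nat -> option V)
  (f : formula C) : Prop :=
  match f with
  | FEq t1 t2 => match term_eval c e t1, term_eval c e t2 with
                 | Some a, Some b => a = b | _, _ => False end
  | FAdj t1 t2 => match term_eval c e t1, term_eval c e t2 with
                  | Some a, Some b => adj a b | _, _ => False end
  | FNot g => ~ sat adj c e g
  | FAnd g h => sat adj c e g /\ sat adj c e h
  | FEx i g => exists v : V,
      sat adj c (fun j => if j == i then Some v else e j) g
  end.

Definition env_of V (s : seq V) : nat -> option V := onth s.

Definition defset C V (adj : V -> V -> Prop) (c : C -> V) (p : nat)
  (f : formula C) : set (p.-tuple V) :=
  [set t : p.-tuple V | sat adj c (env_of t) f].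

Arguments defset {C V} adj c p f.

Record fin_graph := FinGraph {
  fvert : finType;
  fadj : rel fvert;
  fadj_sym : symmetric fadj;
  fadj_irr : irreflexive fadj }.

Definition fgadj (G : fin_graph) : fvert G -> fvert G -> Prop :=
  fun x y => fadj x y.

Definition fdefset C (G : fin_graph) (c : C -> fvert G) (p : nat)
  (f : formula C) : {set p.-tuple (fvert G)} :=
  [set t : p.-tuple (fvert G) | `[< sat (@fgadj G) c (env_of t) f >]].

Arguments fdefset {C G} c p f.

Definition fpairing (R : realType) C (G : fin_graph) (c : C -> fvert G)
  (p : nat) (f : formula C) : R :=
  if p is 0 then (if `[< sat (@fgadj G) c (fun _ => None) f >] then 1 else 0)
  else (#|fdefset c p f|%:R / (#|fvert G|%:R ^+ p)).

Definition fdefset1 C (G : fin_graph) (c : C -> fvert G) (f : formula C)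
  : {set fvert G} :=
  [set v : fvert G | `[< sat (@fgadj G) c (env_of [:: v]) f >]].

(* Standard Borel space: the sigma-algebra is the Borel sigma-algebra of
   a Polish (separable, completely metrizable) topology. *)
Definition standard_borel (R : realType) (d : measure_display)
  (T : measurableType d) : Prop :=
  exists dist : T -> T -> R,
    [/\ (forall x y, dist x y = 0 <-> x = y),
        (forall x y, dist x y = dist y x),
        (forall x y z, dist x z <= dist x y + dist y z) &
     [/\
        (forall u : nat -> T,
           (forall e, 0 < e -> exists N, forall m n, (N <= m)%N -> (N <= n)%N ->
               dist (u m) (u n) < e) ->
           exists l, forall e, 0 < e -> exists N, forall n, (N <= n)%N ->
               dist (u n) l < e),
        (exists D : set T, countable D /\
           forall x e, 0 < e -> exists y, D y /\ dist x y < e) &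
        (* measurable sets = Borel sets of the metric topology *)
        (forall A : set T, measurable A <->
           <<s [set B : set T | forall x, B x ->
                  exists e, 0 < e /\ forall y, dist x y < e -> B y] >> A)]].

(* the product measure nu^{(x)p} on p-tuples, defined as the iterated
   integral  nu^{(x)(p+1)}(A) = \int nu^{(x)p}(A_x) dnu(x),  A_x the section *)
Fixpoint tuple_measure (R : realType) (d : measure_display)
  (V : measurableType d) (nu : {measure set V -> \bar R}) (p : nat)
  : set (p.-tuple V) -> \bar R :=
  match p return set (p.-tuple V) -> \bar R with
  | 0 => fun A => if `[< A [tuple] >] then 1%E else 0%E
  | k.+1 => fun A =>
      (\int[nu]_x tuple_measure nu [set t : k.-tuple V | A (cons_tuple x t)])%E
  end.

Arguments tuple_measure {R d V} nu p.

Definition mpairing (R : realType) (d : measure_display) (V : measurableType d)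
  (nu : {measure set V -> \bar R}) (adj : V -> V -> Prop) C (c : C -> V)
  (p : nat) (f : formula C) : R :=
  if p is 0 then (if `[< sat adj c (fun _ => None) f >] then 1 else 0)
  else fine (tuple_measure nu p (defset adj c p f)).

Definition mdefset1 C V (adj : V -> V -> Prop) (c : C -> V) (f : formula C)
  : set V := [set v : V | sat adj c (env_of [:: v]) f].

Definition is_modeling (R : realType) (d : measure_display)
  (V : measurableType d) (nu : probability V R) (adj : V -> V -> Prop) : Prop :=
  [/\ (forall x y, adj x y -> adj y x),
      (forall x, ~ adj x x),
      standard_borel R V &
      (forall p (f : graph_formula), (1 <= p)%N -> has_fv p f ->
         measurable (defset adj (@of_void V) p f))].

Definition FO_convergent (R : realType) (G : nat -> fin_graph) : Prop :=
  forall p (f : graph_formula), has_fv p f ->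
    cvg ((fun n => @fpairing R _ (G n) (@of_void _) p f) @ \oo).

Definition modeling_limit (R : realType) (G : nat -> fin_graph)
  (d : measure_display) (V : measurableType d) (nu : probability V R)
  (adj : V -> V -> Prop) : Prop :=
  is_modeling nu adj /\
  forall p (f : graph_formula), has_fv p f ->
    (fun n => @fpairing R _ (G n) (@of_void _) p f) @ \oo
      --> mpairing nu adj (@of_void V) p f.

From HB Require Import structures.
From mathcomp Require Import all_boot all_order all_algebra.
From mathcomp Require Import all_classical all_reals all_analysis.
From mathcomp Require Import measurable_realfun.
From mathcomp Require Import zify lra.
Set Implicit Arguments. Unset Strict Implicit. Unset Printing Implicit Defensive.
Import Order.TTheory GRing.Theory Num.Theory.
Import numFieldNormedType.Exports.
Local Open Scope classical_set_scope.
Local Open Scope ring_scope.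

(* Choose r_n in xi(G_n) and r in xi(L) maximising the rooted pairing of phi.
   For m >= 0 the graph formula Psi_m := exists_root_blocks m,
     Psi_m(x_0, ..., x_m) := exists y, xi(y) /\ /\_(b <= m) phi(x_b)[Root := y],
   where the x_b are blocks of p variables, defines the union over u in xi(G) of the
   product sets phi(G, u)^(m+1).  Hence a^(m+1) <= <Psi_m, G> <= |xi(G)| a^(m+1) for the
   maximal rooted pairing a, and likewise in L, where product sets get product measure.
   Since <Psi_m, G_n> converges to <Psi_m, L> for every m and |xi(G_n)| is constant, the
   maximal pairings of G_n and of L agree up to a factor |xi|^(1/(m+1)), which tends to 1. *)

Definition tsubst C D (s : nat -> nat) (k : C -> term D) (t : term C) : term D :=
  match t with TVar i => TVar (s i) | TConst c => k c end.

Fixpoint fsubst C D (s : nat -> nat) (k : C -> term D) (f : formula C) :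
    formula D :=
  match f with
  | FEq t1 t2 => FEq (tsubst s k t1) (tsubst s k t2)
  | FAdj t1 t2 => FAdj (tsubst s k t1) (tsubst s k t2)
  | FNot g => FNot (fsubst s k g)
  | FAnd g h => FAnd (fsubst s k g) (fsubst s k h)
  | FEx i g => FEx (s i) (fsubst s k g)
  end.

Section Substitution.
Variables (C D V : Type) (adj : V -> V -> Prop) (cC : C -> V) (cD : D -> V).
Variables (s : nat -> nat) (k : C -> term D).
Hypothesis s_inj : injective s.
Hypothesis k_fresh : forall c i, k c <> TVar (s i).

Lemma term_eval_tsubst e t :
  (forall c, term_eval cD e (k c) = Some (cC c)) ->
  term_eval cD e (tsubst s k t) = term_eval cC (e \o s) t.
Proof. by case: t => [i|c] //= ->. Qed.

Lemma sat_fsubst f e : (forall c, term_eval cD e (k c) = Some (cC c)) ->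
  sat adj cD e (fsubst s k f) <-> sat adj cC (e \o s) f.
Proof.
elim: f e => [t1 t2|t1 t2|g IH|g IHg h IHh|i g IH] e ke /=.
- by rewrite !term_eval_tsubst.
- by rewrite !term_eval_tsubst.
- by rewrite IH.
- by rewrite IHg // IHh.
- have ke' v c : term_eval cD (fun j => if j == s i then Some v else e j) (k c)
      = Some (cC c).
    case: (k c) (ke c) (@k_fresh c i) => [y|c'] //= ey yi.
    by case: eqP => // ysi; case: yi; rewrite ysi.
  have upd_s v : (fun j => if j == s i then Some v else e j) \o s
      = (fun j => if j == i then Some v else (e \o s) j).
    by apply: funext => j /=; rewrite (inj_eq s_inj).
  by split=> -[v Hv]; exists v; move: Hv; rewrite IH // upd_s.
Qed.

Lemma free_vars_tsubst t j : j \in term_vars (tsubst s k t) ->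
  (exists2 i, i \in term_vars t & j = s i) \/ (exists c, k c = TVar j).
Proof.
case: t => [i|c] /=; first by rewrite inE => /eqP ->; left; exists i; rewrite ?inE.
by case E: (k c) => [y|c'] //=; rewrite inE => /eqP ->; right; exists c.
Qed.

Lemma free_vars_fsubst f j : j \in free_vars (fsubst s k f) ->
  (exists2 i, i \in free_vars f & j = s i) \/ (exists c, k c = TVar j).
Proof.
elim: f j => [t1 t2|t1 t2|g IH|g IHg h IHh|i g IH] j /=.
- rewrite mem_cat => /orP[] /free_vars_tsubst [[i Hi ->]|]; auto;
    by left; exists i; rewrite // mem_cat Hi ?orbT.
- rewrite mem_cat => /orP[] /free_vars_tsubst [[i Hi ->]|]; auto;
    by left; exists i; rewrite // mem_cat Hi ?orbT.
- exact: IH.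
- rewrite mem_cat => /orP[/IHg|/IHh] [[i Hi ->]|]; auto;
    by left; exists i; rewrite // mem_cat Hi ?orbT.
- rewrite mem_filter => /andP[ji /IH [[i' Hi' ji']|]]; auto.
  left; exists i' => //; rewrite mem_filter Hi' andbT.
  by apply: contra ji => /eqP i'i; rewrite ji' i'i.
Qed.

End Substitution.

Lemma eq_sat_free_vars C V (adj : V -> V -> Prop) (c : C -> V) (f : formula C) e1 e2 :
  (forall j, j \in free_vars f -> e1 j = e2 j) ->
  sat adj c e1 f <-> sat adj c e2 f.
Proof.
elim: f e1 e2 => [t1 t2|t1 t2|g IH|g IHg h IHh|i g IH] e1 e2 e12 /=.
- by case: t1 e12 => [i1|c1]; case: t2 => [i2|c2] /= e12;
    rewrite ?e12 ?inE ?eqxx ?orbT.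
- by case: t1 e12 => [i1|c1]; case: t2 => [i2|c2] /= e12;
    rewrite ?e12 ?inE ?eqxx ?orbT.
- by rewrite (IH e1 e2).
- by rewrite (IHg e1 e2) ?(IHh e1 e2) // => j Hj; apply: e12;
    rewrite mem_cat Hj ?orbT.
- have upd v j : j \in free_vars g ->
      (if j == i then Some v else e1 j) = (if j == i then Some v else e2 j).
    by case: ifP => // ji Hj; apply: e12; rewrite mem_filter ji Hj.
  by split=> -[v Hv]; exists v; move: Hv; rewrite (IH _ _ (upd v)).
Qed.

Lemma env_of_nil V : env_of (@nil V) = fun _ => None.
Proof. by apply: funext => -[]. Qed.

Lemma onth_take_drop V (s : seq V) n q j :
  onth (take q (drop n s)) j = if (j < q)%N then onth s (n + j) else None.
Proof.
rewrite !onthE map_take map_drop; case: ifP => jq; first by rewrite nth_take ?nth_drop.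
by rewrite nth_default // size_take; case: ltnP; lia.
Qed.

Fixpoint all_blocks V (p : nat) (P : seq V -> Prop) m (s : seq V) : Prop :=
  match m with
  | 0 => P (take p s)
  | m'.+1 => P (take p s) /\ all_blocks p P m' (drop p s)
  end.

Lemma all_blocksE V p (P : seq V -> Prop) m s :
  all_blocks p P m s <-> forall b, (b <= m)%N -> P (take p (drop (b * p) s)).
Proof.
elim: m s => [|m IH] s /=.
  by split=> [Ps [|b]|/(_ 0%N)]; rewrite ?drop0; auto.
rewrite IH; split=> [[P0 Ps] [|b] bm|Ps]; rewrite ?drop0 //.
  by rewrite mulSn addnC -drop_drop; apply: Ps.
split=> [|b bm]; first by have := Ps 0%N; rewrite drop0; apply.
by rewrite drop_drop addnC -mulSn; apply: Ps.
Qed.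

Section BlockFormulas.
Variables (p : nat) (phi : rooted_formula).
Hypothesis phi_fv : has_fv p phi.

(* The free variables x_j (j < p) of phi go to block b, i.e. to x_(off + b p + j);
   its bound variables are moved beyond y and every block, so they capture nothing. *)
Definition block_var off y b j : nat :=
  if (j < p)%N then (off + b * p + j)%N else (j + (off + y + b * p + p + 1))%N.

Lemma block_var_inj off y b : injective (block_var off y b).
Proof. by move=> i j; rewrite /block_var; do 2 case: ifP; lia. Qed.

Definition block_formula off y b : graph_formula :=
  fsubst (block_var off y b) (fun _ => TVar y) phi.

Fixpoint blocks_formula off y m : graph_formula :=
  match m with
  | 0 => block_formula off y 0
  | m'.+1 => FAnd (block_formula off y m) (blocks_formula off y m')
  end.

Lemma free_vars_blocks_formula off y m j : j \in free_vars (blocks_formula off y m) ->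
  j = y \/ exists2 b, (b <= m)%N & (off + b * p <= j < off + b * p + p)%N.
Proof.
have in_block b : j \in free_vars (block_formula off y b) ->
    j = y \/ (off + b * p <= j < off + b * p + p)%N.
  case/free_vars_fsubst => [[i /(allP phi_fv) ip ->]|[c [->]]]; last by left.
  right; rewrite /block_var ip; lia.
elim: m => [|m IH] /=; first by case/in_block; auto; right; exists 0%N.
rewrite mem_cat => /orP[/in_block[]|/IH[|[b bm]]]; auto.
  by right; exists m.+1.
by right; exists b => //; apply: leqW.
Qed.

Section Semantics.
Variables (V : Type) (adj : V -> V -> Prop) (e : nat -> option V) (v : V).
Variables (off y m : nat).
Hypothesis y_fresh : forall b, (b <= m)%N -> forall i, block_var off y b i <> y.
Hypothesis e_y : e y = Some v.

Lemma sat_blocks_formulaP :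
  sat adj (@of_void V) e (blocks_formula off y m) <->
  forall b, (b <= m)%N -> sat adj (fun _ => v) (e \o block_var off y b) phi.
Proof.
have sat_block b : (b <= m)%N -> sat adj (@of_void V) e (block_formula off y b)
    <-> sat adj (fun _ => v) (e \o block_var off y b) phi.
  move=> bm; apply: sat_fsubst => [|c i []|c] //; first exact: block_var_inj.
  exact/nesym/y_fresh.
elim: m y_fresh sat_block => [|n IH] fresh sat_block /=.
  by rewrite sat_block //; split=> [H [|b] //|]; apply.
rewrite sat_block // IH => [|b bn|b bn]; last 2 first.
- exact/fresh/leqW.
- exact/sat_block/leqW.
split=> [[H0 H] b|H]; last by split=> [|b bn]; apply: H => //; apply: leqW.
by rewrite leq_eqVlt => /orP[/eqP ->|]; [|apply: H].
Qed.

Lemma sat_blocks_formula (s : seq V) :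
  (forall b j, (b <= m)%N -> (j < p)%N -> e (off + b * p + j)%N = onth s (b * p + j)) ->
  sat adj (@of_void V) e (blocks_formula off y m) <->
  all_blocks p (fun u => sat adj (fun _ => v) (env_of u) phi) m s.
Proof.
move=> e_s; rewrite sat_blocks_formulaP all_blocksE.
have block_env b : (b <= m)%N -> sat adj (fun _ => v) (e \o block_var off y b) phi
    <-> sat adj (fun _ => v) (env_of (take p (drop (b * p) s))) phi.
  move=> bm; apply: eq_sat_free_vars => j /(allP phi_fv) jp.
  by rewrite /= /block_var jp e_s // /env_of onth_take_drop jp.
by split=> H b bm; [rewrite -block_env | rewrite block_env] => //; apply: H.
Qed.

End Semantics.

Section RootFormulas.
Variable xi : graph_formula.
Hypothesis xi_fv : has_fv 1 xi.

Definition root_var y j := if j == 0%N then y else (j + y)%N.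

Lemma root_var_inj y : injective (root_var y).
Proof. by move=> i j; rewrite /root_var; do 2 case: eqP; lia. Qed.

Definition exists_root_blocks m : graph_formula :=
  FEx (p * m.+1) (FAnd (fsubst (root_var (p * m.+1)) (@of_void (term void)) xi)
                       (blocks_formula 0 (p * m.+1) m)).

Definition root_blocks m : graph_formula := blocks_formula 1 0 m.

Lemma sat_root_var V (adj : V -> V -> Prop) y e v : e y = Some v ->
  sat adj (@of_void V) e (fsubst (root_var y) (@of_void (term void)) xi) <->
  sat adj (@of_void V) (env_of [:: v]) xi.
Proof.
move=> e_y; rewrite sat_fsubst; [|exact: root_var_inj|by case|by case].
apply: eq_sat_free_vars => j /(allP xi_fv); rewrite ltnS leqn0 => /eqP ->.
by rewrite /= /root_var eqxx e_y.
Qed.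

Lemma sat_exists_root_blocks V (adj : V -> V -> Prop) (t : seq V) m :
  size t = (p * m.+1)%N ->
  sat adj (@of_void V) (env_of t) (exists_root_blocks m) <->
  exists v, sat adj (@of_void V) (env_of [:: v]) xi /\
            all_blocks p (fun u => sat adj (fun _ => v) (env_of u) phi) m t.
Proof.
move=> tsize.
have blocks_in b : (b <= m)%N -> (b * p + p <= p * m.+1)%N.
  by move=> bm; rewrite addnC mulnC -mulnS leq_mul2l ltnS bm orbT.
have upd_blocks v : sat adj (@of_void V)
      (fun j => if j == (p * m.+1)%N then Some v else env_of t j)
      (blocks_formula 0 (p * m.+1) m) <->
    all_blocks p (fun u => sat adj (fun _ => v) (env_of u) phi) m t.
  apply: sat_blocks_formula => [b /blocks_in bp i||b j /blocks_in bp jp /=].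
  - by rewrite /block_var; case: ltnP; lia.
  - by rewrite eqxx.
  - by case: eqP => //; lia.
have upd_root v : sat adj (@of_void V)
      (fun j => if j == (p * m.+1)%N then Some v else env_of t j)
      (fsubst (root_var (p * m.+1)) (@of_void (term void)) xi) <->
    sat adj (@of_void V) (env_of [:: v]) xi.
  by apply: sat_root_var; rewrite eqxx.
by split=> -[v [xi_v blocks_v]]; exists v; split;
  [exact/upd_root|exact/upd_blocks|exact/upd_root|exact/upd_blocks].
Qed.

Lemma sat_root_blocks V (adj : V -> V -> Prop) v (t : seq V) m :
  sat adj (@of_void V) (env_of (v :: t)) (root_blocks m) <->
  all_blocks p (fun u => sat adj (fun _ => v) (env_of u) phi) m t.
Proof.
by apply: sat_blocks_formula => // b _ i; rewrite /block_var; case: ltnP; lia.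
Qed.

Lemma has_fv_exists_root_blocks m : has_fv (p * m.+1) (exists_root_blocks m).
Proof.
apply/allP => j /=; rewrite mem_filter => /andP[jy].
rewrite mem_cat => /orP[|/free_vars_blocks_formula[jy'|[b bm /andP[_ jb]]]].
- case/free_vars_fsubst => [[i /(allP xi_fv)]|[[]]].
  by rewrite ltnS leqn0 => /eqP i0 ji; move: jy; rewrite ji i0 /root_var !eqxx.
- by rewrite jy' eqxx in jy.
- by apply: leq_trans jb _; rewrite add0n addnC mulnC -mulnS leq_mul2l ltnS bm orbT.
Qed.

Lemma has_fv_root_blocks m : has_fv (p * m.+1).+1 (root_blocks m).
Proof.
apply/allP => j /free_vars_blocks_formula[-> //|[b bm /andP[_ jb]]].
apply: leq_trans jb _.
by rewrite add1n addSn ltnS addnC mulnC -mulnS leq_mul2l ltnS bm orbT.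
Qed.

End RootFormulas.
End BlockFormulas.

Section Counting.
Variable W : finType.

Definition pred_count n (P : seq W -> Prop) : nat :=
  #|[set t : n.-tuple W | `[< P t >]]%SET|.

Lemma card_set_sum (T : finType) (b : pred T) : #|[set t | b t]%SET| = (\sum_t b t)%N.
Proof.
by rewrite -sum1_card big_mkcond; apply: eq_bigr => t _; rewrite inE; case: (b t).
Qed.

Lemma pred_count0 P : pred_count 0 P = `[< P [::] >].
Proof.
rewrite /pred_count card_set_sum (big_pred1 [tuple]) // => t.
by apply/esym/eqP; apply: tuple0.
Qed.

Lemma pred_countS n P :
  pred_count n.+1 P = (\sum_(x : W) pred_count n (fun s => P (x :: s)))%N.
Proof.
rewrite /pred_count card_set_sum.
have cons_bij : {on [pred _ | true],
    bijective (fun xt : W * n.-tuple W => cons_tuple xt.1 xt.2)}.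
  exists (fun t : n.+1.-tuple W => (thead t, [tuple of behead t])).
    by move=> [x t] _; congr pair; apply: val_inj.
  by move=> t _; rewrite [RHS]tuple_eta; apply: val_inj.
rewrite (reindex _ cons_bij).
rewrite -(pair_big xpredT xpredT (fun x t => `[< P (x :: tval t) >] : nat)).
by apply: eq_bigr => x _; rewrite card_set_sum.
Qed.

Lemma eq_pred_count n (P Q : seq W -> Prop) :
  (forall s, size s = n -> P s <-> Q s) -> pred_count n P = pred_count n Q.
Proof.
move=> PQ; apply: eq_card => t; rewrite !inE.
by apply/asboolP/asboolP => /PQ; apply; rewrite size_tuple.
Qed.

Lemma le_pred_count n (P Q : seq W -> Prop) :
  (forall s, P s -> Q s) -> (pred_count n P <= pred_count n Q)%N.
Proof.
by move=> PQ; apply/subset_leq_card/fintype.subsetP => t; rewrite !inE; apply: PQ.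
Qed.

Lemma pred_countM p q (P Q : seq W -> Prop) :
  pred_count (p + q) (fun s => P (take p s) /\ Q (drop p s))
    = (pred_count p P * pred_count q Q)%N.
Proof.
elim: p P => [|p IH] P.
  rewrite add0n pred_count0; case: asboolP => P0.
    by rewrite mul1n; apply: eq_pred_count => s _; rewrite take0 drop0; split=> // -[].
  by rewrite mul0n; apply/eqP; rewrite cards_eq0; apply/eqP/setP => t; rewrite !inE take0;
    apply/asboolP => -[].
rewrite addSn !pred_countS big_distrl /=; apply: eq_bigr => x _.
by rewrite -(IH (fun s => P (x :: s))).
Qed.

Lemma pred_count_union_le (U : finType) (X : {set U}) n (Q : U -> seq W -> Prop) :
  (pred_count n (fun s => exists2 u, u \in X & Q u s)
    <= \sum_(u in X) pred_count n (Q u))%N.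
Proof.
rewrite /pred_count card_set_sum.
under [X in (_ <= X)%N]eq_bigr => u _ do rewrite card_set_sum.
rewrite exchange_big; apply: leq_sum => t _.
by case: asboolP => // -[u uX Qu]; rewrite (bigD1 u) //= asboolT.
Qed.

Lemma pred_count_all_blocks p (P : seq W -> Prop) m :
  pred_count (p * m.+1) (all_blocks p P m) = (pred_count p P ^ m.+1)%N.
Proof.
elim: m => [|m IH].
  by rewrite muln1; apply: eq_pred_count => s <-; rewrite /= take_size.
by rewrite mulnS (pred_countM p (p * m.+1) P (all_blocks p P m)) IH [in RHS]expnS.
Qed.

End Counting.

Section TupleMeasure.
Context d (V : measurableType d) (R : realType) (nu : probability V R).
Local Open Scope ereal_scope.

Definition cons_pair k (xt : V * k.-tuple V) : k.+1.-tuple V := cons_tuple xt.1 xt.2.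

Lemma measurable_cons_pair k : measurable_fun setT (@cons_pair k).
Proof. exact: measurable_cons measurable_fst measurable_snd. Qed.

HB.instance Definition _ k := isMeasurableFun.Build _ _ _ _ (@cons_pair k)
  (@measurable_cons_pair k).

Lemma cons_section k (A : set (k.+1.-tuple V)) x :
  [set t : k.-tuple V | A (cons_tuple x t)] = xsection (@cons_pair k @^-1` A) x.
Proof. by apply/seteqP; split=> t; rewrite /xsection /= inE. Qed.

Lemma measurable_cons_section k (A : set (k.+1.-tuple V)) x : measurable A ->
  measurable [set t : k.-tuple V | A (cons_tuple x t)].
Proof.
move=> mA; rewrite cons_section; apply: measurable_xsection.
by rewrite -[X in measurable X]setTI; apply: measurable_cons_pair.
Qed.

(* The iterated integral defining tuple_measure is the product probability,
   built here as the pushforward of nu \x P along cons_pair. *)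
Lemma tuple_measure_probability k : exists P : probability (k.-tuple V) R,
  forall A, measurable A -> P A = tuple_measure nu k A.
Proof.
elim: k => [|k [P PE]].
  exists (\d_[tuple] : probability _ R) => A _ /=.
  by rewrite diracE; case: asboolP => A0; [rewrite mem_set | rewrite memNset].
exists (distribution (nu \x P) (@cons_pair k)) => A mA /=.
rewrite /distribution /pushforward /product_measure1 /=.
by apply: eq_integral => x _; rewrite -cons_section PE //; apply: measurable_cons_section.
Qed.

Lemma tuple_measure_ge0 k (A : set (k.-tuple V)) : 0 <= tuple_measure nu k A.
Proof.
elim: k A => [|k IH] A /=; first by case: asboolP.
by apply: integral_ge0 => x _; apply: IH.
Qed.

Lemma tuple_measure_fin_num k (A : set (k.-tuple V)) : measurable A ->
  tuple_measure nu k A \is a fin_num.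
Proof.
move=> mA; have [P PE] := tuple_measure_probability k.
by rewrite -PE // fin_num_measure.
Qed.

Lemma le_tuple_measure k (A B : set (k.-tuple V)) :
  measurable A -> measurable B -> A `<=` B ->
  tuple_measure nu k A <= tuple_measure nu k B.
Proof.
move=> mA mB AB; have [P PE] := tuple_measure_probability k.
by rewrite -!PE //; apply: le_measure; rewrite ?inE.
Qed.

Lemma tuple_measure_bigcup_le (I : eqType) k (s : seq I) (B : I -> set (k.-tuple V)) :
  (forall i, measurable (B i)) ->
  tuple_measure nu k (\bigcup_(i in [set` s]) B i)
    <= \sum_(i <- s) tuple_measure nu k (B i).
Proof.
move=> mB; have [P PE] := tuple_measure_probability k.
have mU (s' : seq I) : measurable (\bigcup_(i in [set` s']) B i).
  exact: fin_bigcup_measurable (finite_seq s') (fun i _ => mB i).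
rewrite -PE //; elim: s => [|i s IH].
  by rewrite big_nil (_ : \bigcup_(i in _) _ = set0) ?measure0 // bigcup0.
rewrite big_cons -PE //.
have -> : \bigcup_(j in [set` i :: s]) B j = B i `|` \bigcup_(j in [set` s]) B j.
  apply/seteqP; split=> t /=.
    by move=> [j]; rewrite /= inE => /orP[/eqP ->|js Bj]; [left|right; exists j].
  move=> [Bi|[j js Bj]]; first by exists i; rewrite /= ?inE ?eqxx.
  by exists j; rewrite /= ?inE ?js ?orbT.
by apply: le_trans (measureU2 _ (mB i) (mU s)) _; rewrite leeD2l.
Qed.

Lemma measurable_tuple_measure_section k (A : set (k.+1.-tuple V)) : measurable A ->
  measurable_fun setT (fun x => tuple_measure nu k [set t | A (cons_tuple x t)]).
Proof.
move=> mA; have [P PE] := tuple_measure_probability k.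
have -> : (fun x => tuple_measure nu k [set t | A (cons_tuple x t)])
    = P \o xsection (@cons_pair k @^-1` A).
  apply: funext => x /=; rewrite -cons_section PE //.
  exact: measurable_cons_section.
apply: measurable_fun_xsection.
by rewrite -[X in measurable X]setTI; apply: measurable_cons_pair.
Qed.

Definition pred_measure n (P : seq V -> Prop) :=
  tuple_measure nu n [set t : n.-tuple V | P t].

Lemma pred_measureM p q (P Q : seq V -> Prop) :
  measurable [set t : p.-tuple V | P t] ->
  pred_measure (p + q) (fun s => P (take p s) /\ Q (drop p s))
    = pred_measure p P * pred_measure q Q.
Proof.
elim: p P => [|p IH] P mP.
  rewrite /pred_measure /=; case: asboolP => P0.
    rewrite mul1e; congr tuple_measure.
    by apply/seteqP; split=> t; rewrite /= take0 drop0 => //; case.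
  rewrite mul0e; have [PP PPE] := tuple_measure_probability q.
  rewrite (_ : [set t | _] = set0) -?PPE ?measure0 //.
  by apply/seteqP; split=> t //= -[]; rewrite take0.
have mPx x : measurable [set t : p.-tuple V | P (x :: t)].
  exact: measurable_cons_section x mP.
have pred_measureS n (P' : seq V -> Prop) :
  pred_measure n.+1 P' = \int[nu]_x pred_measure n (fun s => P' (x :: s)) by [].
rewrite addSn !pred_measureS.
under eq_integral => x _ do rewrite /= (IH (fun s => P (x :: s))) //.
rewrite ge0_integralZr //; first exact: measurable_tuple_measure_section mP.
- by move=> x _; apply: tuple_measure_ge0.
- exact: tuple_measure_ge0.
Qed.

Lemma pred_measure_all_blocks p (P : seq V -> Prop) m :
  measurable [set t : p.-tuple V | P t] ->
  pred_measure (p * m.+1) (all_blocks p P m) = (fine (pred_measure p P) ^+ m.+1)%:E.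
Proof.
move=> mP; have Pfin := tuple_measure_fin_num mP.
elim: m => [|m IH].
  rewrite expr1 fineK // muln1 /pred_measure; congr tuple_measure.
  by apply/seteqP; split=> t /=; rewrite take_oversize ?size_tuple.
rewrite mulnS (pred_measureM (p * m.+1) (all_blocks p P m) mP) IH.
by rewrite [in RHS]exprS EFinM fineK.
Qed.

End TupleMeasure.

Lemma fpairingE (R : realType) C (G : fin_graph) (c : C -> fvert G) n f :
  fpairing R c n f
    = (pred_count n (fun s => sat (@fgadj G) c (env_of s) f))%:R / #|fvert G|%:R ^+ n.
Proof. by case: n => //=; rewrite pred_count0 env_of_nil expr0 divr1; case: asboolP. Qed.

Lemma fpairing_ge0 (R : realType) C (G : fin_graph) (c : C -> fvert G) n f :
  0 <= fpairing R c n f.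
Proof. by rewrite fpairingE divr_ge0 ?exprn_ge0. Qed.

Lemma mpairingE (R : realType) d (V : measurableType d) (nu : {measure set V -> \bar R})
    (adj : V -> V -> Prop) C (c : C -> V) n f :
  mpairing nu adj c n f = fine (tuple_measure nu n (defset adj c n f)).
Proof. by case: n => //=; rewrite /defset /= env_of_nil; case: asboolP. Qed.

Lemma mpairing_ge0 (R : realType) d (V : measurableType d) (nu : probability V R)
    (adj : V -> V -> Prop) C (c : C -> V) n f :
  0 <= mpairing nu adj c n f.
Proof. by rewrite mpairingE fine_ge0 ?tuple_measure_ge0. Qed.

Section PowerBounds.
Variable R : realType.

Lemma exists_pow_gap (K x y : R) : 0 <= x -> x < y ->
  exists m : nat, K * x ^+ m.+1 < y ^+ m.+1.
Proof.
move=> x0 xy; have y0 : 0 < y := le_lt_trans x0 xy.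
have z0 : 0 <= x / y by rewrite divr_ge0 // ltW.
have : (x / y) ^+ n @[n --> \oo] --> 0.
  by apply: cvg_expr; rewrite ger0_norm // ltr_pdivrMr // mul1r.
have K1 : 0 < `|K| + 1 by rewrite ltr_wpDl.
have K1V : 0 < (`|K| + 1)^-1 by rewrite invr_gt0.
move=> /cvgr0Pnorm_lt/(_ _ K1V) [N _ /(_ N.+1 (leqnSn N))] /=.
rewrite ger0_norm ?exprn_ge0 // -(ltr_pM2l K1) mulfV ?gt_eqF // => zK.
exists N; move: zK; rewrite expr_div_n mulrA ltr_pdivrMr ?exprn_gt0 // mul1r.
have := exprn_ge0 N.+1 x0; have := ler_norm K; nra.
Qed.

(* Raising to the power m+1 turns any gap between a n and c into a factor exceeding K,
   while U n m converges for each fixed m. *)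
Lemma cvg_of_power_bounds (K K' : R) (a : nat -> R) (c : R)
    (U : nat -> nat -> R) (UL : nat -> R) :
  0 < K -> (forall n, 0 <= a n) -> 0 <= c ->
  (forall n m, a n ^+ m.+1 <= U n m <= K * a n ^+ m.+1) ->
  (forall m, c ^+ m.+1 <= UL m <= K' * c ^+ m.+1) ->
  (forall m, U ^~ m @ \oo --> UL m) -> a @ \oo --> c.
Proof.
move=> K0 a0 c0 U_bd UL_bd U_cvg; apply/cvgrPdist_lt => e e0.
have upper : \forall n \near \oo, a n < c + e.
  have [m cem] : exists m, K' * c ^+ m.+1 < (c + e) ^+ m.+1.
    by apply: exists_pow_gap; rewrite ?ltrDl.
  have /andP[_ ULm] := UL_bd m.
  have gap : 0 < (c + e) ^+ m.+1 - UL m by rewrite subr_gt0 (le_lt_trans ULm).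
  near=> n; have /andP[aU _] := U_bd n m.
  have : `|UL m - U n m| < (c + e) ^+ m.+1 - UL m.
    by near: n; exact: (cvgrPdist_lt _ _).1 (U_cvg m) _ gap.
  rewrite ltr_norml => /andP[Un _].
  rewrite -(ltr_pXn2r (ltn0Sn m)) ?nnegrE ?addr_ge0 ?(ltW e0) //; lra.
have lower : \forall n \near \oo, c - e < a n.
  have [ce0|ce0] := ltP (c - e) 0; first by near=> n; apply: lt_le_trans ce0 (a0 n).
  have [m cem] : exists m, K * (c - e) ^+ m.+1 < c ^+ m.+1.
    by apply: exists_pow_gap; rewrite ?gtrBl.
  have /andP[cUL _] := UL_bd m.
  have gap : 0 < UL m - K * (c - e) ^+ m.+1 by rewrite subr_gt0 (lt_le_trans cem).
  near=> n; have /andP[_ Ua] := U_bd n m.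
  have : `|UL m - U n m| < UL m - K * (c - e) ^+ m.+1.
    by near: n; exact: (cvgrPdist_lt _ _).1 (U_cvg m) _ gap.
  rewrite ltr_norml => /andP[_ Un].
  rewrite -(ltr_pXn2r (ltn0Sn m)) ?nnegrE // -(ltr_pM2l K0); lra.
near=> n; rewrite ltr_distlC; apply/andP; split; near: n; [exact: lower | exact: upper].
Unshelve. all: by end_near.
Qed.
End PowerBounds.

Lemma seq_argmax (disp : Order.disp_t) (O : orderType disp) (T : eqType)
    (f : T -> O) (s : seq T) :
  s != [::] -> exists2 r, r \in s & forall u, u \in s -> (f u <= f r)%O.
Proof.
elim: s => [//|x s IH] _.
have [->|s0] := eqVneq s [::].
  by exists x; rewrite ?mem_head // => u; rewrite inE => /eqP ->.
have [r rs r_max] := IH s0; have [xr|rx] := leP (f x) (f r).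
  by exists r => [|u]; rewrite inE ?rs ?orbT // => /predU1P[->|/r_max].
exists x => [|u]; first exact: mem_head.
by rewrite inE => /predU1P[->//|/r_max/le_trans]; apply; apply: ltW.
Qed.

Lemma finset_argmax (disp : Order.disp_t) (O : orderType disp) (T : finType)
    (f : T -> O) (A : {set T}) :
  (0 < #|A|)%N -> {r | r \in A /\ forall u, u \in A -> (f u <= f r)%O}.
Proof.
rewrite cardE lt0n size_eq0 => A0; apply: cid.
have [r] := seq_argmax f A0; rewrite mem_enum => rA r_max.
by exists r; split=> // u; rewrite -mem_enum; apply: r_max.
Qed.

Section FiniteSide.
Variables (R : realType) (p : nat) (phi : rooted_formula) (xi : graph_formula).
Hypotheses (phi_fv : has_fv p phi) (xi_fv : has_fv 1 xi).
Variables (G : fin_graph) (r : fvert G) (m : nat).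
Let X := fdefset1 (@of_void (fvert G)) xi.
Let a (u : fvert G) := fpairing R (fun _ : unit => u) p phi.
Hypotheses (rX : r \in X) (r_max : forall u, u \in X -> a u <= a r).

Lemma fpairing_exists_root_blocks_bounds :
  a r ^+ m.+1 <= fpairing R (@of_void (fvert G)) (p * m.+1) (exists_root_blocks p phi xi m)
              <= #|X|%:R * a r ^+ m.+1.
Proof.
pose P u s := sat (@fgadj G) (fun _ => u) (env_of s) phi.
pose D := #|fvert G|%:R ^+ (p * m.+1) : R.
have blocks_pairing u : (pred_count (p * m.+1) (all_blocks p (P u) m))%:R / D = a u ^+ m.+1.
  by rewrite pred_count_all_blocks natrX /a fpairingE expr_div_n -exprM.
have -> : fpairing R (@of_void (fvert G)) (p * m.+1) (exists_root_blocks p phi xi m)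
    = (pred_count (p * m.+1) (fun s => exists2 u, u \in X & all_blocks p (P u) m s))%:R / D.
  rewrite fpairingE; congr (_%:R / _); apply: eq_pred_count => s s_size.
  rewrite sat_exists_root_blocks //.
  split=> [[u [xi_u Bu]]|[u]]; first by exists u; rewrite // /X inE; apply: asboolT.
  by rewrite /X inE => /asboolW xi_u Bu; exists u.
have D0 : 0 <= D^-1 by rewrite invr_ge0 exprn_ge0.
apply/andP; split.
  rewrite -blocks_pairing ler_wpM2r // ler_nat.
  by apply: le_pred_count => s; exists r.
apply: le_trans (_ : \sum_(u in X) a u ^+ m.+1 <= _).
  rewrite -(eq_bigr _ (fun u _ => blocks_pairing u)) -mulr_suml -natr_sum.
  by rewrite ler_wpM2r // ler_nat pred_count_union_le.
rewrite mulr_natl -sumr_const; apply: ler_sum => u uX.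
by rewrite lerXn2r ?nnegrE ?fpairing_ge0 ?r_max.
Qed.

End FiniteSide.

Section ModelingSide.
Variables (R : realType) (p : nat) (phi : rooted_formula) (xi : graph_formula).
Hypotheses (phi_fv : has_fv p phi) (xi_fv : has_fv 1 xi).
Context d (V : measurableType d) (nu : probability V R) (adj : V -> V -> Prop).
Hypothesis L_modeling : is_modeling nu adj.
Let P v s := sat adj (fun _ : unit => v) (env_of s) phi.

(* The tuples of blocks rooted at v form the section at v of the definable set
   root_blocks(L). *)
Lemma measurable_all_blocks v m :
  measurable [set t : (p * m.+1).-tuple V | all_blocks p (P v) m t].
Proof.
have [_ _ _ definable] := L_modeling.
have := measurable_cons_section v (definable _ _ (ltn0Sn _) (has_fv_root_blocks phi_fv m)).
by congr measurable; apply/seteqP; split=> t; rewrite /defset /= (sat_root_blocks phi_fv).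
Qed.

Lemma measurable_rooted_defset v : measurable [set t : p.-tuple V | P v t].
Proof.
have := @measurable_all_blocks v 0%N; rewrite muln1; congr measurable.
by apply/seteqP; split=> t; rewrite /= take_oversize ?size_tuple.
Qed.

Variables (s : seq V) (r : V) (m : nat).
Let c v := mpairing nu adj (fun _ : unit => v) p phi.
Hypotheses (xi_s : mdefset1 adj (@of_void V) xi = [set` s]) (rs : r \in s).
Hypothesis r_max : forall v, v \in s -> c v <= c r.

Lemma mpairing_exists_root_blocks_bounds :
  c r ^+ m.+1 <= mpairing nu adj (@of_void V) (p * m.+1) (exists_root_blocks p phi xi m)
              <= (size s)%:R * c r ^+ m.+1.
Proof.
pose B v := [set t : (p * m.+1).-tuple V | all_blocks p (P v) m t].
have blocks_measure v : tuple_measure nu _ (B v) = (c v ^+ m.+1)%:E.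
  rewrite -[LHS]/(pred_measure nu _ (all_blocks p (P v) m)) pred_measure_all_blocks.
    by rewrite /c mpairingE.
  exact: (@measurable_rooted_defset v).
have mB v : measurable (B v) := @measurable_all_blocks v m.
have mU : measurable (\bigcup_(v in [set` s]) B v).
  exact: fin_bigcup_measurable (finite_seq s) (fun v _ => mB v).
rewrite mpairingE.
have -> : defset adj (@of_void V) (p * m.+1) (exists_root_blocks p phi xi m)
    = \bigcup_(v in [set` s]) B v.
  apply/seteqP; split=> t.
    move/(sat_exists_root_blocks phi_fv xi_fv adj (size_tuple t)) => [v [xi_v Bv]].
    by exists v; rewrite // -xi_s.
  move=> [v sv Bv]; apply/(sat_exists_root_blocks phi_fv xi_fv adj (size_tuple t)).
  by exists v; split; rewrite // -[sat _ _ _ _]/(mdefset1 adj (@of_void V) xi v) xi_s.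
have U_fin := tuple_measure_fin_num nu mU.
apply/andP; split.
  rewrite -[_ ^+ _]/(fine (c r ^+ m.+1)%:E) -blocks_measure.
  apply: fine_le; rewrite ?tuple_measure_fin_num //.
  by apply: le_tuple_measure => // t Bt; exists r.
apply: le_trans (_ : \sum_(v <- s) c v ^+ m.+1 <= _).
  rewrite -lee_fin fineK // -sumEFin -(eq_bigr _ (fun v _ => blocks_measure v)).
  exact: tuple_measure_bigcup_le.
apply: le_trans (_ : _ <= \sum_(v <- s) c r ^+ m.+1) _.
  rewrite !big_seq; apply: ler_sum => v vs.
  by rewrite lerXn2r ?nnegrE ?mpairing_ge0 ?r_max.
by rewrite big_const_seq count_predT iter_addr_0 mulr_natl.
Qed.

End ModelingSide.

Local Open Scope card_scope.

Lemma card_eq_II_const T (A : set T) (k : nat -> nat) :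
  A != set0 -> (forall n, A #= `I_(k n)) -> forall n, k n = k 0%N /\ (0 < k n)%N.
Proof.
move=> A0 Ak n; split.
  by apply/card_eq_II/(card_eq_trans _ (Ak 0%N)); rewrite card_eq_sym.
by rewrite lt0n; apply: contra A0 => /eqP kn0; have := Ak n; rewrite kn0 II0 card_eq0.
Qed.

Theorem lemma3 (R : realType) (G : nat -> fin_graph)
  (d : measure_display) (V : measurableType d) (nu : probability V R)
  (adjL : V -> V -> Prop) (xi : graph_formula) :
  FO_convergent R G ->
  modeling_limit G nu adjL ->
  has_fv 1 xi ->
  finite_set (mdefset1 adjL (@of_void V) xi) ->
  mdefset1 adjL (@of_void V) xi != set0 ->
  (forall chi : graph_formula, has_fv 1 chi ->
     ~ [/\ mdefset1 adjL (@of_void V) chi `<=` mdefset1 adjL (@of_void V) xi,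
           mdefset1 adjL (@of_void V) chi != set0 &
           mdefset1 adjL (@of_void V) chi != mdefset1 adjL (@of_void V) xi]) ->
  (forall n, mdefset1 adjL (@of_void V) xi
               #= `I_(#|fdefset1 (@of_void _) xi : {set fvert (G n)}|)) ->
  forall p (phi : rooted_formula), has_fv p phi ->
    exists rn : forall n, fvert (G n),
      (forall n, rn n \in fdefset1 (@of_void _) xi) /\
      exists r : V, mdefset1 adjL (@of_void V) xi r /\
        (fun n => @fpairing R _ (G n) (fun _ => rn n) p phi) @ \oo
          --> mpairing nu adjL (fun _ : unit => r) p phi.
Proof.
move=> _ [L_modeling L_limit] xi_fv xiL_fin xiL0 _ xi_card p phi phi_fv.
pose X n := fdefset1 (@of_void (fvert (G n))) xi.
pose Psi m := exists_root_blocks p phi xi m.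
have /all_and2[XG_card XG0] := card_eq_II_const xiL0 xi_card.
have /all_sig[rn /all_and2[rnX rn_max]] :=
  fun n => finset_argmax (fun u => fpairing R (fun _ : unit => u) p phi) (XG0 n).
have [s xi_s] := (finite_seqP _).1 xiL_fin.
have s0 : s != [::].
  by apply: contra xiL0; rewrite xi_s => /eqP ->; apply/eqP/seteqP; split.
have [r rs r_max] := seq_argmax (fun v => mpairing nu adjL (fun _ : unit => v) p phi) s0.
exists rn; split => //; exists r; split; first by rewrite xi_s.
apply: (cvg_of_power_bounds (K := #|X 0%N|%:R) (K' := (size s)%:R)
  (U := fun n m => fpairing R (@of_void (fvert (G n))) (p * m.+1) (Psi m))
  (UL := fun m => mpairing nu adjL (@of_void V) (p * m.+1) (Psi m))).
- by rewrite ltr0n XG0.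
- by move=> n; apply: fpairing_ge0.
- exact: mpairing_ge0.
- move=> n m; rewrite -(XG_card n).
  by apply: (fpairing_exists_root_blocks_bounds phi_fv xi_fv m (rnX n)); apply: rn_max.
- by move=> m; apply: mpairing_exists_root_blocks_bounds.
- by move=> m; apply: L_limit; apply: has_fv_exists_root_blocks.
Qed.
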